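(* Let $\rho,\sigma$ be commuting quantum states on a $d$-dimensional Hilbert space with $\sigma$ full-rank, and let $1>\epsilon>0$. Let $\rho^\epsilon_{\mathrm{st}}$ and $\rho^\epsilon_{\mathrm{fl}}$ be the $\epsilon$-steep and $\epsilon$-flat approximations of $\rho$ relative to $\sigma$. Then for all $x\in[0,1]$, $$\mathcal L_{\rho^\epsilon_{\mathrm{st}}|\sigma}(x)\ge \ell_{r_{\mathrm{st}}}(x),\quad r_{\mathrm{st}}=2^{S(\rho\|\sigma)-f_\sigma(\rho,\epsilon)},\qquad \mathcal L_{\rho^\epsilon_{\mathrm{fl}}|\sigma}(x)\le \ell_{r_{\mathrm{fl}}}(x),\quad r_{\mathrm{fl}}=2^{S(\rho\|\sigma)+f_\sigma(\rho,\epsilon)},$$ where $f_\sigma(\rho,\epsilon):=\sqrt{V(\rho\|\sigma)(\epsilon^{-1}-1)}$ and $\ell_c(x)=\min(c\,x,1)$.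
   Context: Logs are base 2; $S(\rho\|\sigma)=\mathrm{Tr}(\rho(\log\rho-\log\sigma))$, $V(\rho\|\sigma)=\mathrm{Tr}(\rho(\log\rho-\log\sigma)^2)-S(\rho\|\sigma)^2$, $D(\rho,\tau)=\frac12\|\rho-\tau\|_1$. Write $\sigma=\sum_i s_i|i\rangle\langle i|$, $\rho=\sum_i p_i|i\rangle\langle i|$ in a common eigenbasis ordered so that $p_i/s_i\ge p_{i+1}/s_{i+1}$. For a state $\tau=\sum_i t_i|i\rangle\langle i|$ diagonal in this basis, the Lorenz curve $\mathcal L_{\tau|\sigma}:[0,1]\to[0,1]$ is the piecewise linear curve connecting the points $(\sum_{i\le k}s_{\pi(i)},\sum_{i\le k}t_{\pi(i)})$, $k=0,\dots,d$, where $\pi$ orders the indices so that $t_{\pi(i)}/s_{\pi(i)}$ is non-increasing (it is concave). Flat approximation $\rho^\epsilon_{\mathrm{fl}}=\sum_i\bar p_i|i\rangle\langle i|$: if $D(\rho,\sigma)<\epsilon$ set $\bar p_i=s_i$; otherwise let $M\in\{1,\dots,d-1\}$ be the smallest integer with $\epsilon\le\sum_{i=1}^M p_i-\frac{p_{M+1}}{s_{M+1}}\sum_{i=1}^M s_i$, let $N\in\{2,\dots,d\}$ be the largest integer with $\epsilon\le\frac{p_{N-1}}{s_{N-1}}\sum_{i=N}^d s_i-\sum_{i=N}^d p_i$ (these exist and $M\le N$), and set $\bar p_i=s_i\frac{(\sum_{j=1}^M p_j)-\epsilon}{\sum_{j=1}^M s_j}$ for $i\le M$, $\bar p_i=s_i\frac{(\sum_{j=N}^d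 p_j)+\epsilon}{\sum_{j=N}^d s_j}$ for $i\ge N$, and $\bar p_i=p_i$ otherwise. Steep approximation $\rho^\epsilon_{\mathrm{st}}=\sum_i\hat p_i|i\rangle\langle i|$: if $\epsilon\le 1-p_1$, let $R\in\{2,\dots,d\}$ be the largest index with $\sum_{i=R}^d p_i\ge\epsilon$, $r=\sum_{i=R+1}^d p_i$, and set $\hat p_1=p_1+\epsilon$, $\hat p_i=p_i$ for $1<i<R$, $\hat p_R=p_R-(\epsilon-r)$, $\hat p_i=0$ for $i>R$; if $\epsilon>1-p_1$, set $\hat p_1=1$ and $\hat p_i=0$ for $i>1$. *)

From HB Require Import structures.
From mathcomp Require Import all_boot all_order all_algebra.
From mathcomp Require Import all_classical all_reals all_analysis.
Set Implicit Arguments. Unset Strict Implicit. Unset Printing Implicit Defensive.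
Import Order.TTheory GRing.Theory Num.Theory.
Local Open Scope ring_scope.

(* Conventions: states rho, sigma commute, so they are diagonal in a common
   eigenbasis |1>,...,|d>.  They are represented by their eigenvalue lists
   p, s : nat -> R, where only the entries with indices 1..d are relevant
   (1-indexed exactly as in the paper).  *)

Section Defs.
Variable R : realType.

Definition log2 (x : R) : R := ln x / ln 2.

Definition sum_to (f : nat -> R) (m : nat) : R := \sum_(1 <= i < m.+1) f i.
Definition sum_from (d : nat) (f : nat -> R) (n : nat) : R := \sum_(n <= i < d.+1) f i.

Definition relent (d : nat) (p s : nat -> R) : R :=
  \sum_(1 <= i < d.+1) (if p i == 0 then 0 else p i * (log2 (p i) - log2 (s i))).

Definition relvar (d : nat) (p s : nat -> R) : R :=
  \sum_(1 <= i < d.+1) (if p i == 0 then 0 else p i * (log2 (p i) - log2 (s i)) ^+ 2)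
  - (relent d p s) ^+ 2.

Definition trdist (d : nat) (p s : nat -> R) : R :=
  2^-1 * \sum_(1 <= i < d.+1) `|p i - s i|.

Definition fsig (d : nat) (p s : nat -> R) (eps : R) : R :=
  Num.sqrt (relvar d p s * (eps^-1 - 1)).

Definition ell (c x : R) : R := Num.min (c * x) 1.

Definition condM (p s : nat -> R) (eps : R) (m : nat) : bool :=
  eps <= sum_to p m - p m.+1 / s m.+1 * sum_to s m.
Definition condN (d : nat) (p s : nat -> R) (eps : R) (n : nat) : bool :=
  eps <= p n.-1 / s n.-1 * sum_from d s n - sum_from d p n.
Definition flatM (d : nat) (p s : nat -> R) (eps : R) : nat :=
  head 0%N [seq m <- iota 1 d.-1 | condM p s eps m].
Definition flatN (d : nat) (p s : nat -> R) (eps : R) : nat :=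
  last 0%N [seq n <- iota 2 d.-1 | condN d p s eps n].

Definition flat (d : nat) (p s : nat -> R) (eps : R) (i : nat) : R :=
  if trdist d p s < eps then s i else
  let M := flatM d p s eps in
  let N := flatN d p s eps in
  if (i <= M)%N then s i * ((sum_to p M - eps) / sum_to s M)
  else if (N <= i)%N then s i * ((sum_from d p N + eps) / sum_from d s N)
  else p i.

Definition steepR (d : nat) (p : nat -> R) (eps : R) : nat :=
  last 0%N [seq r <- iota 2 d.-1 | eps <= sum_from d p r].

Definition steep (d : nat) (p : nat -> R) (eps : R) (i : nat) : R :=
  if eps <= 1 - p 1%N then
    let Rr := steepR d p eps in
    let r := sum_from d p Rr.+1 in
    if i == 1%N then p 1%N + eps
    else if (i < Rr)%N then p i
    else if i == Rr then p Rr - (eps - r)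
    else 0
  else (if i == 1%N then 1 else 0).

Definition perm_on_1d (d : nat) (pi : nat -> nat) : Prop :=
  (forall i, (1 <= i <= d)%N -> (1 <= pi i <= d)%N) /\
  (forall i j, (1 <= i <= d)%N -> (1 <= j <= d)%N -> pi i = pi j -> i = j).

Definition lorenz_order (d : nat) (t s : nat -> R) (pi : nat -> nat) : Prop :=
  perm_on_1d d pi /\
  (forall i, (1 <= i < d)%N -> t (pi i.+1) / s (pi i.+1) <= t (pi i) / s (pi i)).

Definition lorX (s : nat -> R) (pi : nat -> nat) (k : nat) : R :=
  \sum_(1 <= i < k.+1) s (pi i).
Definition lorY (t : nat -> R) (pi : nat -> nat) (k : nat) : R :=
  \sum_(1 <= i < k.+1) t (pi i).

(* index k of the segment [X_k, X_{k+1}] containing x (k in 0..d-1) *)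
Definition lorseg (d : nat) (s : nat -> R) (pi : nat -> nat) (x : R) : nat :=
  (\sum_(1 <= j < d) nat_of_bool (lorX s pi j <= x)%R)%N.

Definition lorenz (d : nat) (t s : nat -> R) (pi : nat -> nat) (x : R) : R :=
  let k := lorseg d s pi x in
  lorY t pi k + (lorY t pi k.+1 - lorY t pi k) / (lorX s pi k.+1 - lorX s pi k)
                * (x - lorX s pi k).

End Defs.

From HB Require Import structures.
From mathcomp Require Import all_boot all_order all_algebra.
From mathcomp Require Import all_classical all_reals all_analysis.
From mathcomp Require Import zify ring lra.
Import Order.TTheory GRing.Theory Num.Theory.
Local Open Scope ring_scope.

(* Under rho, the log-likelihood ratio L_i = log2 (p_i / s_i) has mean S(rho||sigma)
   and variance V(rho||sigma), so by Cantelli's one-sided inequality the p-mass of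
   {L < S - f} and of {L > S + f} is at most eps, with f = sqrt (V (1/eps - 1)).
   As p_i / s_i is non-increasing, {p_i < r_st s_i} is a tail of indices; its p-mass is
   at most eps, so the steep approximation, which deletes a tail of p-mass exactly eps,
   vanishes there.  Likewise every prefix sum of p exceeds r_fl times that of s by at
   most eps, which caps the levels to which the flat approximation flattens p, giving
   flat_i <= r_fl s_i.  Finally, a Lorenz curve whose slopes are at most c lies below
   min(c x, 1), while a concave one reaching height 1 within s-mass 1/c lies above it. *)

Section RangeSums.
Variable R : numDomainType.
Implicit Types F : nat -> R.

Lemma sumr_ge0_nat F m n : (forall i, (m <= i < n)%N -> 0 <= F i) ->
  0 <= \sum_(m <= i < n) F i.
Proof. by move=> F0; rewrite big_nat; apply: sumr_ge0. Qed.

Lemma ler_term_sum_nat F m n i : (forall j, (m <= j < n)%N -> 0 <= F j) ->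
  (m <= i < n)%N -> F i <= \sum_(m <= j < n) F j.
Proof.
move=> F0 /andP[mi ilt]; rewrite (@big_cat_nat _ _ _ i) //=; last exact: ltnW.
rewrite [X in _ + X]big_ltn //= addrCA lerDl.
by rewrite addr_ge0 // sumr_ge0_nat // => j ?; apply: F0; lia.
Qed.

Lemma antitone_nat_range (f : nat -> R) d i j :
  (forall k, (1 <= k < d)%N -> f k.+1 <= f k) ->
  (1 <= i <= j)%N -> (j <= d)%N -> f j <= f i.
Proof.
move=> f_step; elim: j => [|j IHj] ij jd; first lia.
have [-> //|ij'] := eqVneq i j.+1.
by apply: le_trans (IHj _ (ltnW jd)); [apply: f_step | ]; lia.
Qed.

End RangeSums.

Arguments sumr_ge0_nat {R F m n}.
Arguments ler_term_sum_nat {R F m n i}.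
Arguments antitone_nat_range {R f d i j}.

Section PrefixSums.
Variable R : realType.
Implicit Types F : nat -> R.

Lemma sum_to0 F : sum_to F 0 = 0.
Proof. by rewrite /sum_to big_geq. Qed.

Lemma sum_toS F k : sum_to F k.+1 = sum_to F k + F k.+1.
Proof. by rewrite /sum_to big_nat_recr. Qed.

Lemma sum_to_sum_from d F m : (m <= d)%N ->
  sum_to F m + sum_from d F m.+1 = sum_to F d.
Proof. by move=> md; rewrite /sum_to /sum_from -big_cat_nat. Qed.

Lemma sum_fromE d F n : (n <= d)%N -> sum_from d F n = F n + sum_from d F n.+1.
Proof. by move=> nd; rewrite /sum_from big_ltn. Qed.

Lemma sum_to_le d F a b : (forall i, (1 <= i <= d)%N -> 0 <= F i) ->
  (a <= b <= d)%N -> sum_to F a <= sum_to F b.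
Proof.
move=> F0 /andP[ab bd]; rewrite /sum_to (@big_cat_nat _ _ _ a.+1 1 b.+1) //=.
by rewrite lerDl sumr_ge0_nat // => i hi; apply: F0; lia.
Qed.

Lemma sum_to_perm F d pi : perm_on_1d d pi -> sum_to (F \o pi) d = sum_to F d.
Proof.
move=> [pi_range pi_inj]; rewrite /sum_to -(big_map pi xpredT F); apply: perm_big.
have pi_uniq : uniq (map pi (index_iota 1 d.+1)).
  by rewrite map_inj_in_uniq ?iota_uniq // => a b; rewrite !mem_index_iota => ha hb; apply: pi_inj; lia.
have pi_sub : {subset map pi (index_iota 1 d.+1) <= index_iota 1 d.+1}.
  by move=> z /mapP[y]; rewrite !mem_index_iota => /pi_range ? ->; lia.
have [_ pi_image] := uniq_min_size pi_uniq pi_sub (eq_leq (esym (size_map _ _))).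
exact: uniq_perm pi_uniq (iota_uniq _ _) pi_image.
Qed.

End PrefixSums.

Arguments sum_to_le {R d F a b}.

Lemma head_filter_iota {P : pred nat} {a n} : (exists2 j, (a <= j < a + n)%N & P j) ->
  let h := head 0%N [seq j <- iota a n | P j] in
  [/\ (a <= h < a + n)%N, P h & forall j, (a <= j < a + n)%N -> P j -> (h <= j)%N].
Proof.
elim: n a => [|n IHn] a [j hj Pj] /=; first lia.
case: ifP => Pa /=; first by split => // [|i hi _]; lia.
have [|h1 h2 h3] := IHn a.+1.
  by exists j => //; case: (eqVneq j a) => [ja|ja]; [rewrite -ja Pj in Pa | lia].
split => // [|i hi Pi]; first lia.
by case: (eqVneq i a) => [ia|ia]; [rewrite -ia Pi in Pa | apply: h3 => //; lia].
Qed.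

Lemma last_filter_iota {P : pred nat} {a n} : (exists2 j, (a <= j < a + n)%N & P j) ->
  let l := last 0%N [seq j <- iota a n | P j] in
  [/\ (a <= l < a + n)%N, P l & forall j, (a <= j < a + n)%N -> P j -> (j <= l)%N].
Proof.
elim: n => [|n IHn] [j hj Pj]; first lia.
rewrite -addn1 iotaD filter_cat /= addn1; case: ifP => Pa /=.
  by rewrite cats1 last_rcons; split => // [|i hi _]; lia.
rewrite cats0; have [|h1 h2 h3] := IHn.
  by exists j => //; case: (eqVneq j (a + n)%N) => [ja|ja]; [rewrite -ja Pj in Pa | lia].
split => // [|i hi Pi]; first lia.
case: (eqVneq i (a + n)%N) => [ia|ia]; first by rewrite -ia Pi in Pa.
by apply: h3 => //; lia.
Qed.

Lemma lorenz_comp (R : realType) d (t s : nat -> R) pi x :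
  lorenz d t s pi x = lorenz d (t \o pi) (s \o pi) id x.
Proof. by []. Qed.

Section LorenzCurve.
Variables (R : realType) (d : nat) (u v : nat -> R).
Hypothesis d_gt0 : (0 < d)%N.
Hypothesis v_gt0 : forall i, (1 <= i <= d)%N -> 0 < v i.
Hypothesis v_sum1 : sum_to v d = 1.
Hypothesis u_ge0 : forall i, (1 <= i <= d)%N -> 0 <= u i.
Hypothesis u_sum1 : sum_to u d = 1.

Let v_ge0 i : (1 <= i <= d)%N -> 0 <= v i.
Proof. by move/v_gt0/ltW. Qed.

Lemma lorseg_spec x n : 0 <= x -> (1 <= n <= d)%N ->
  let k := lorseg n v id x in
  [/\ (k < n)%N, sum_to v k <= x & (k.+1 < n)%N -> x < sum_to v k.+1].
Proof.
move=> x0; elim: n => [//|n IHn] nd /=.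
have [->|n_gt0] := posnP n; first by rewrite /lorseg big_geq // sum_to0.
have [k_lt k_le k_gt] := IHn ltac:(lia).
rewrite /lorseg big_nat_recr //= -/(lorseg n v id x).
move: k_lt k_le k_gt; set k := lorseg n v id x => k_lt k_le k_gt.
have [Xn_le|Xn_gt] := boolP (sum_to v n <= x); last first.
  rewrite addn0; split=> // [|kn]; first lia.
  have [/k_gt //|kn'] := ltnP k.+1 n.
  by rewrite (_ : k.+1 = n) ?ltNge //; lia.
have kn : k.+1 = n.
  apply/eqP; rewrite eqn_leq k_lt leqNgt; apply/negP => kn.
  have := k_gt kn; rewrite ltNge (le_trans _ Xn_le) // (sum_to_le v_ge0) //; lia.
by rewrite addn1 kn; split=> //; lia.
Qed.

Lemma lorenz_segment x : 0 <= x <= 1 ->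
  exists k lam, [/\ (k < d)%N, 0 <= lam <= 1,
    x = sum_to v k + lam * v k.+1 & lorenz d u v id x = sum_to u k + lam * u k.+1].
Proof.
move=> /andP[x0 x1]; have [] := @lorseg_spec x d x0 ltac:(lia).
rewrite /lorenz; set k := lorseg d v id x => k_lt k_le k_gt; clearbody k.
change (lorY u id k) with (sum_to u k); change (lorY u id k.+1) with (sum_to u k.+1).
change (lorX v id k) with (sum_to v k); change (lorX v id k.+1) with (sum_to v k.+1).
have vk : 0 < v k.+1 by apply: v_gt0; lia.
have x_le : x <= sum_to v k.+1.
  have [/k_gt/ltW //|kd] := ltnP k.+1 d.
  by rewrite (_ : k.+1 = d) ?v_sum1 //; lia.
have dY : sum_to u k.+1 - sum_to u k = u k.+1 by rewrite sum_toS addrAC subrr add0r.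
have dX : sum_to v k.+1 - sum_to v k = v k.+1 by rewrite sum_toS addrAC subrr add0r.
exists k, ((x - sum_to v k) / v k.+1); rewrite dY dX.
split=> //; last by congr (_ + _); ring.
  apply/andP; split; first by rewrite divr_ge0 ?subr_ge0 // ltW.
  by rewrite ler_pdivrMr // mul1r lerBlDl -sum_toS.
by rewrite divfK ?gt_eqF // addrC subrK.
Qed.

Lemma lorenz_le_ell c x : (forall i, (1 <= i <= d)%N -> u i <= c * v i) ->
  0 <= x <= 1 -> lorenz d u v id x <= ell c x.
Proof.
move=> u_le x01; have [k [lam [kd /andP[lam0 lam1] -> ->]]] := lorenz_segment _ x01.
have uk0 : 0 <= u k.+1 by apply: u_ge0; lia.
rewrite /ell le_min; apply/andP; split.
  have Yk : sum_to u k <= c * sum_to v k.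
    by rewrite /sum_to mulr_sumr; apply: ler_sum_nat => i hi; apply: u_le; lia.
  have := ler_wpM2l lam0 (u_le k.+1 ltac:(lia)); lra.
have := sum_to_le u_ge0 (a := k.+1) (b := d) ltac:(lia).
rewrite sum_toS u_sum1; have := ler_wpM2r uk0 lam1; lra.
Qed.

Hypothesis ratio_sorted : forall i, (1 <= i < d)%N -> u i.+1 / v i.+1 <= u i / v i.

Lemma ratio_cross a b : (1 <= a <= b)%N -> (b <= d)%N -> u b * v a <= u a * v b.
Proof.
move=> ab bd; have := antitone_nat_range ratio_sorted ab bd.
have va : 0 < v a by apply: v_gt0; lia.
have vb : 0 < v b by apply: v_gt0; lia.
by rewrite ler_pdivrMr // mulrAC ler_pdivlMr.
Qed.

Lemma support_prefix : exists2 m, (1 <= m <= d)%N &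
  (forall i, (1 <= i <= m)%N -> 0 < u i) /\ (forall i, (m < i <= d)%N -> u i = 0).
Proof.
have u_ex : exists2 j, (1 <= j < 1 + d)%N & 0 < u j.
  apply: contrapT => no_pos; move: u_sum1.
  rewrite /sum_to big_nat big1 => [/esym/eqP|i hi]; first by rewrite oner_eq0.
  apply/eqP; rewrite eq_le u_ge0 ?andbT; last lia.
  by rewrite leNgt; apply/negP => ui; apply: no_pos; exists i.
have /= [m_range um m_max] := last_filter_iota u_ex.
set m := last _ _ in m_range um m_max; exists m; first lia; split=> i hi.
  have := ratio_cross i m ltac:(lia) ltac:(lia).
  have vi : 0 < v i by apply: v_gt0; lia.
  by move/(lt_le_trans (mulr_gt0 um vi)); rewrite pmulr_lgt0 //; apply: v_gt0; lia.
apply/eqP; rewrite eq_le u_ge0 ?andbT; last lia.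
by rewrite leNgt; apply/negP => /(m_max i ltac:(lia)); lia.
Qed.

Lemma sum_to_cross j n : (j <= n <= d)%N ->
  sum_to v j * sum_to u n <= sum_to u j * sum_to v n.
Proof.
move=> /andP[]; elim: n => [|n IHn] jn nd.
  by rewrite (_ : j = 0%N) 1?mulrC //; lia.
have [->|jn'] := eqVneq j n.+1; first by rewrite mulrC.
rewrite !sum_toS !mulrDr lerD ?IHn //; try lia.
rewrite /sum_to !mulr_suml; apply: ler_sum_nat => a ha.
by rewrite mulrC ratio_cross //; lia.
Qed.

Lemma ell_le_lorenz c w x : (forall i, (1 <= i <= d)%N -> 0 <= w i) ->
  sum_to w d = 1 -> (forall i, (1 <= i <= d)%N -> 0 < u i -> c * v i <= w i) ->
  0 <= c -> 0 <= x <= 1 -> ell c x <= lorenz d u v id x.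
Proof.
move=> w_ge0 w_sum1 uw c0 x01.
have [m m_range [u_pos u_zero]] := support_prefix.
have Ym : sum_to u m = 1.
  have tail0 : sum_from d u m.+1 = 0.
    by rewrite /sum_from big_nat big1 // => i hi; apply: u_zero; lia.
  by rewrite -u_sum1 -(@sum_to_sum_from _ d u m) ?tail0 ?addr0 //; lia.
have cXm : c * sum_to v m <= 1.
  rewrite -w_sum1; apply: (le_trans _ (sum_to_le w_ge0 (a := m) (b := d) _)); last lia.
  by rewrite /sum_to mulr_sumr; apply: ler_sum_nat => i hi; apply: uw; [|apply: u_pos]; lia.
have [k [lam [kd /andP[lam0 lam1] xE ->]]] := lorenz_segment _ x01.
have uk0 : 0 <= u k.+1 by apply: u_ge0; lia.
have Yk0 : 0 <= sum_to u k by apply: sumr_ge0_nat => i hi; apply: u_ge0; lia.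
rewrite /ell ge_min; have [km|mk] := ltnP k m; last first.
  have -> : u k.+1 = 0 by apply: u_zero; lia.
  suff -> : sum_to u k = 1 by rewrite mulr0 addr0 lexx orbT.
  apply/eqP; rewrite eq_le; apply/andP; split.
    by rewrite -u_sum1 (sum_to_le u_ge0) //; lia.
  by rewrite -Ym (sum_to_le u_ge0) //; lia.
have h1 := sum_to_cross k m ltac:(lia).
have h2 := sum_to_cross k.+1 m ltac:(lia).
rewrite Ym mulr1 in h1; rewrite Ym mulr1 !sum_toS in h2.
have x_le : x <= (sum_to u k + lam * u k.+1) * sum_to v m.
  have lam1' : 0 <= 1 - lam by rewrite subr_ge0.
  have := ler_wpM2l lam1' h1; have := ler_wpM2l lam0 h2; nra.
apply/orP; left.
have L0 : 0 <= sum_to u k + lam * u k.+1 by rewrite addr_ge0 ?mulr_ge0.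
have := ler_wpM2l c0 x_le; have := ler_wpM2r L0 cXm; nra.
Qed.

End LorenzCurve.

Definition mass {R : realType} (d : nat) (w : nat -> R) (E : pred nat) : R :=
  \sum_(1 <= i < d.+1) (if E i then w i else 0).

Lemma ler_mass {R : realType} d (w : nat -> R) (E F : pred nat) :
  (forall i, (1 <= i <= d)%N -> 0 <= w i) ->
  (forall i, (1 <= i <= d)%N -> 0 < w i -> E i -> F i) -> mass d w E <= mass d w F.
Proof.
move=> w_ge0 EF; apply: ler_sum_nat => i hi; have wi := w_ge0 i ltac:(lia).
case: ifP => Ei; case: ifP => Fi //; rewrite ?lexx //.
by move: wi; rewrite le_eqVlt => /orP[/eqP <- //|/EF]; rewrite Ei Fi => /(_ ltac:(lia) isT).
Qed.

Section Cantelli.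
Variables (R : realType) (d : nat) (w Y : nat -> R) (V : R).
Hypothesis w_ge0 : forall i, (1 <= i <= d)%N -> 0 <= w i.
Hypothesis w_sum1 : \sum_(1 <= i < d.+1) w i = 1.
Hypothesis Y_mean0 : \sum_(1 <= i < d.+1) w i * Y i = 0.
Hypothesis Y_var : V = \sum_(1 <= i < d.+1) w i * Y i ^+ 2.

Let wY2_ge0 i : (1 <= i < d.+1)%N -> 0 <= w i * Y i ^+ 2.
Proof. by move=> hi; rewrite mulr_ge0 ?sqr_ge0 ?w_ge0. Qed.

Lemma var_ge0 : 0 <= V.
Proof. by rewrite Y_var sumr_ge0_nat. Qed.

Lemma cantelli_nat a : 0 < a -> mass d w [pred i | a < Y i] * (a ^+ 2 + V) <= V.
Proof.
move=> a_gt0; have a_neq0 : a != 0 by rewrite gt_eqF.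
set u := V / a; have u_ge0 : 0 <= u by rewrite divr_ge0 ?var_ge0 ?ltW.
have shifted : mass d w [pred i | a < Y i] * (a + u) ^+ 2 <= V + u ^+ 2.
  have -> : V + u ^+ 2 = \sum_(1 <= i < d.+1) w i * (Y i + u) ^+ 2.
    have -> : V + u ^+ 2 = V + 2 * u * \sum_(1 <= i < d.+1) w i * Y i
                             + u ^+ 2 * \sum_(1 <= i < d.+1) w i.
      by rewrite Y_mean0 w_sum1; ring.
    rewrite Y_var !mulr_sumr -!big_split /=; apply: eq_bigr => i _; ring.
  rewrite /mass mulr_suml; apply: ler_sum_nat => i hi.
  case: ifP => [Yi|_]; last by rewrite mul0r mulr_ge0 ?sqr_ge0 ?w_ge0.
  have Yu : a + u <= Y i + u by rewrite lerD2r; apply: ltW.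
  have au : 0 <= a + u := addr_ge0 (ltW a_gt0) u_ge0.
  by rewrite ler_wpM2l ?w_ge0 // ler_sqr ?nnegrE // (le_trans au Yu).
have s_gt0 : 0 < a ^+ 2 + V by have := exprn_gt0 2 a_gt0; have := var_ge0; lra.
rewrite -(ler_pM2r s_gt0) -mulrA -expr2.
have -> : (a ^+ 2 + V) ^+ 2 = a ^+ 2 * (a + u) ^+ 2 by rewrite /u; field.
have -> : V * (a ^+ 2 + V) = a ^+ 2 * (V + u ^+ 2) by rewrite /u; field.
by rewrite mulrCA ler_wpM2l ?sqr_ge0.
Qed.

Lemma cantelli_eps eps : 0 < eps -> eps < 1 ->
  mass d w [pred i | Num.sqrt (V * (eps^-1 - 1)) < Y i] <= eps.
Proof.
move=> eps_gt0 eps_lt1; have eps_inv : 0 < eps^-1 - 1 by rewrite subr_gt0 invf_gt1.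
have [V0|V_neq0] := eqVneq V 0.
  rewrite V0 mul0r sqrtr0 (le_trans _ (ltW eps_gt0)) // /mass big_nat big1 // => i hi.
  case: ifP => // Yi; have := ler_term_sum_nat wY2_ge0 hi.
  rewrite -Y_var V0 => wY0; have /eqP : w i * Y i ^+ 2 = 0.
    by apply/eqP; rewrite eq_le wY0 wY2_ge0.
  by rewrite mulf_eq0 sqrf_eq0 (gt_eqF Yi) orbF => /eqP.
have V_gt0 : 0 < V by rewrite lt_neqAle eq_sym V_neq0 var_ge0.
set f := Num.sqrt _; have f_gt0 : 0 < f by rewrite sqrtr_gt0 mulr_gt0.
have f2 : f ^+ 2 + V = V / eps.
  by rewrite sqr_sqrtr ?mulr_ge0 ?ltW //; field; rewrite gt_eqF.
by have := cantelli_nat _ f_gt0; rewrite f2 mulrA ler_pdivrMr // mulrC ler_pM2l.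
Qed.

End Cantelli.

Section BinaryLog.
Variable R : realType.

Lemma ln2_gt0 : 0 < ln (2 : R).
Proof. by rewrite ln_gt0 // ltr1n. Qed.

Lemma powR2_ge1 (y : R) : 0 <= y -> 1 <= powR 2 y.
Proof. by move=> y0; rewrite -[X in X <= _](powRr0 2); apply: ler_powR; rewrite ?ler1n. Qed.

Lemma ltr_powR2M_log2 (a b y : R) : 0 < a -> 0 < b ->
  (a < powR 2 y * b) = (log2 a - log2 b < y).
Proof.
move=> a0 b0; have l2 := ln2_gt0.
rewrite -ltr_ln ?posrE ?mulr_gt0 ?powR_gt0 // lnM ?posrE ?powR_gt0 // ln_powR.
by rewrite /log2 -mulrBl ltr_pdivrMr // ltrBlDr.
Qed.

Lemma gtr_powR2M_log2 (a b y : R) : 0 < a -> 0 < b ->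
  (powR 2 y * b < a) = (y < log2 a - log2 b).
Proof.
move=> a0 b0; have l2 := ln2_gt0.
rewrite -ltr_ln ?posrE ?mulr_gt0 ?powR_gt0 // lnM ?posrE ?powR_gt0 // ln_powR.
by rewrite /log2 -mulrBl ltr_pdivlMr // ltrBrDr.
Qed.

End BinaryLog.

Section RelativeEntropy.
Variables (R : realType) (d : nat) (p s : nat -> R).
Hypothesis p_ge0 : forall i, (1 <= i <= d)%N -> 0 <= p i.
Hypothesis p_sum1 : \sum_(1 <= i < d.+1) p i = 1.

Lemma relentE : relent d p s = \sum_(1 <= i < d.+1) p i * (log2 (p i) - log2 (s i)).
Proof. by apply: eq_big_nat => i _; case: ifP => // /eqP ->; rewrite mul0r. Qed.

Lemma relvarE : relvar d p s =
  \sum_(1 <= i < d.+1) p i * (log2 (p i) - log2 (s i) - relent d p s) ^+ 2.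
Proof.
set L := fun i => log2 (p i) - log2 (s i).
have expand S : \sum_(1 <= i < d.+1) p i * (L i - S) ^+ 2 =
    \sum_(1 <= i < d.+1) p i * L i ^+ 2 - 2 * S * \sum_(1 <= i < d.+1) p i * L i
    + S ^+ 2 * \sum_(1 <= i < d.+1) p i.
  by rewrite !mulr_sumr -sumrB -big_split /=; apply: eq_bigr => i _; ring.
set S := relent d p s; rewrite expand.
rewrite -relentE -/S p_sum1 /relvar -/S.
have -> : \sum_(1 <= i < d.+1) (if p i == 0 then 0 else p i * L i ^+ 2) =
    \sum_(1 <= i < d.+1) p i * L i ^+ 2.
  by apply: eq_big_nat => i _; case: ifP => // /eqP ->; rewrite mul0r.
ring.
Qed.

Lemma llr_tail_masses eps : 0 < eps -> eps < 1 ->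
  mass d p [pred i | fsig d p s eps < relent d p s - (log2 (p i) - log2 (s i))] <= eps /\
  mass d p [pred i | fsig d p s eps < log2 (p i) - log2 (s i) - relent d p s] <= eps.
Proof.
move=> eps_gt0 eps_lt1; set S := relent d p s.
have mean : \sum_(1 <= i < d.+1) p i * (log2 (p i) - log2 (s i) - S) = 0.
  have -> : \sum_(1 <= i < d.+1) p i * (log2 (p i) - log2 (s i) - S) =
      \sum_(1 <= i < d.+1) p i * (log2 (p i) - log2 (s i)) - S * \sum_(1 <= i < d.+1) p i.
    by rewrite mulr_sumr -sumrB; apply: eq_bigr => i _; ring.
  by rewrite -relentE p_sum1 mulr1 subrr.
split; apply: (@cantelli_eps _ d p _ (relvar d p s)) => //.
- by rewrite -[RHS]oppr0 -[in RHS]mean -sumrN; apply: eq_bigr => i _; ring.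
- by rewrite relvarE; apply: eq_bigr => i _; rewrite -/S; ring.
- exact: relvarE.
Qed.

Hypothesis s_gt0 : forall i, (1 <= i <= d)%N -> 0 < s i.
Hypothesis s_sum1 : \sum_(1 <= i < d.+1) s i = 1.

Lemma relent_ge0 : 0 <= relent d p s.
Proof.
have l2 := @ln2_gt0 R; rewrite relentE.
apply: (@le_trans _ _ (\sum_(1 <= i < d.+1) (p i - s i) / ln 2)).
  by rewrite -mulr_suml sumrB p_sum1 s_sum1 subrr mul0r.
apply: ler_sum_nat => i hi; have si : 0 < s i by apply: s_gt0; lia.
have [pi0|pi_neq0] := eqVneq (p i) 0.
  by rewrite pi0 mul0r sub0r mulNr oppr_le0 divr_ge0 // ltW.
have pi_gt0 : 0 < p i by rewrite lt_neqAle eq_sym pi_neq0 p_ge0 //; lia.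
rewrite /log2 -mulrBl mulrA ler_pM2r ?invr_gt0 //.
have := expR_ge1Dx (ln (s i / p i)).
rewrite lnK ?posrE ?divr_gt0 // ln_div ?posrE // => h.
have := ler_wpM2l (ltW pi_gt0) h; rewrite mulrDr mulr1 mulrCA divff ?gt_eqF // mulr1.
lra.
Qed.

End RelativeEntropy.

Arguments llr_tail_masses {R d p s} _ _ {eps}.
Arguments relent_ge0 {R d p s}.

Section Approximations.
Variables (R : realType) (d : nat) (p s : nat -> R) (eps : R).
Hypothesis d_gt0 : (0 < d)%N.
Hypothesis p_ge0 : forall i, (1 <= i <= d)%N -> 0 <= p i.
Hypothesis p_sum1 : \sum_(1 <= i < d.+1) p i = 1.
Hypothesis s_gt0 : forall i, (1 <= i <= d)%N -> 0 < s i.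
Hypothesis s_sum1 : \sum_(1 <= i < d.+1) s i = 1.
Hypothesis ratio_sorted : forall i, (1 <= i < d)%N -> p i.+1 / s i.+1 <= p i / s i.
Hypothesis eps_gt0 : 0 < eps.
Hypothesis eps_lt1 : eps < 1.

Let s_ge0 i : (1 <= i <= d)%N -> 0 <= s i.
Proof. by move/s_gt0/ltW. Qed.

Lemma ratio_le i j : (1 <= i <= j)%N -> (j <= d)%N -> p j / s j <= p i / s i.
Proof. exact: antitone_nat_range ratio_sorted. Qed.

Lemma sum_from_le_mass c i : (1 <= i <= d)%N -> p i < c * s i ->
  sum_from d p i <= mass d p [pred j | p j < c * s j].
Proof.
move=> hi pi_lt; rewrite /mass (@big_cat_nat _ _ _ i) /=; try lia.
rewrite -[sum_from d p i]add0r lerD //.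
  by rewrite sumr_ge0_nat // => j hj; case: ifP => // _; apply: p_ge0; lia.
apply: ler_sum_nat => j hj; rewrite ifT //.
have si := s_gt0 i hi; have sj : 0 < s j by apply: s_gt0; lia.
rewrite -ltr_pdivrMr //; apply: le_lt_trans (ratio_le i j _ _) _; try lia.
by rewrite ltr_pdivrMr.
Qed.

Lemma sum_to_le_mass c m : 0 <= c -> (m <= d)%N ->
  sum_to p m <= mass d p [pred j | c * s j < p j] + c * sum_to s m.
Proof.
move=> c_ge0 md.
apply: (@le_trans _ _ (\sum_(1 <= j < m.+1) ((if c * s j < p j then p j else 0) + c * s j))).
  apply: ler_sum_nat => j hj; have csj : 0 <= c * s j by rewrite mulr_ge0 ?s_ge0 //; lia.
  by case: ifP => [_|/negbT]; [rewrite lerDl | rewrite -leNgt add0r].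
rewrite big_split /= -mulr_sumr lerD2r /mass [X in _ <= X](@big_cat_nat _ _ _ m.+1) /=; try lia.
by rewrite lerDl sumr_ge0_nat // => j hj; case: ifP => // _; apply: p_ge0; lia.
Qed.

Let sum_from1 : sum_from d p 1 = 1 := p_sum1.

Lemma sum_from_ge0 n : (1 <= n)%N -> 0 <= sum_from d p n.
Proof. by move=> n1; apply: sumr_ge0_nat => i hi; apply: p_ge0; lia. Qed.

Local Notation r := (steepR d p eps).

Lemma steepR_spec : eps <= 1 - p 1%N ->
  [/\ (2 <= r <= d)%N, eps <= sum_from d p r & sum_from d p r.+1 < eps].
Proof.
move=> eps_le.
have sum_from2 : sum_from d p 2%N = 1 - p 1%N.
  by have := @sum_fromE _ d p 1 ltac:(lia); rewrite sum_from1; lra.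
have d2 : (2 <= d)%N.
  rewrite ltnNge; apply/negP => d1.
  have S0 : sum_from d p 2%N = 0 by rewrite /sum_from big_geq //; lia.
  by move: eps_le; rewrite -sum_from2 S0 leNgt eps_gt0.
have r_ex : exists2 j, (2 <= j < 2 + d.-1)%N & eps <= sum_from d p j.
  by exists 2%N; [lia | rewrite sum_from2].
have /= [] := last_filter_iota r_ex; rewrite -/r => r_range r_le r_max.
split=> //; first lia.
have [rd|rd] := ltnP r d.
  by rewrite ltNge; apply/negP => /(r_max r.+1 ltac:(lia)); lia.
by rewrite /sum_from big_geq //; lia.
Qed.

Lemma steep_ge0 i : (1 <= i <= d)%N -> 0 <= steep d p eps i.
Proof.
move=> hi; rewrite /steep; case: ifP => [eps_le|_]; last by case: ifP.
have [r_range r_le r_lt] := steepR_spec eps_le.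
have r_split := @sum_fromE _ d p r ltac:(lia).
case: ifP => _; first by rewrite addr_ge0 ?p_ge0 ?ltW.
case: ifP => _; first exact: p_ge0.
by case: ifP => _ //; have := sum_from_ge0 r.+1 isT; lra.
Qed.

Lemma sum_steep : \sum_(1 <= i < d.+1) steep d p eps i = 1.
Proof.
have [eps_le|/negbTE eps_gt] := boolP (eps <= 1 - p 1%N); last first.
  under eq_big_nat => i _ do rewrite /steep eps_gt.
  rewrite big_ltn // eqxx big_nat big1 ?addr0 // => i hi.
  by rewrite ifF //; apply/eqP; lia.
have [r_range r_le r_lt] := steepR_spec eps_le.
have split4 (F : nat -> R) : \sum_(1 <= i < d.+1) F i =
    F 1%N + \sum_(2 <= i < r) F i + F r + sum_from d F r.+1.
  rewrite (@big_ltn _ _ _ 1) ?(@big_cat_nat _ _ _ r 2 d.+1) ?(@big_ltn _ _ _ r d.+1) /=; try lia.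
  by rewrite !addrA.
have mid : \sum_(2 <= i < r) (if i == 1%N then p 1%N + eps else if (i < r)%N then p i
      else if i == r then p r - (eps - sum_from d p r.+1) else 0) = \sum_(2 <= i < r) p i.
  by apply: eq_big_nat => i hi; rewrite ifF ?ifT //; [lia | apply/eqP; lia].
have tail : sum_from d (fun i => if i == 1%N then p 1%N + eps else if (i < r)%N then p i
      else if i == r then p r - (eps - sum_from d p r.+1) else 0) r.+1 = 0.
  rewrite /sum_from big_nat big1 // => i hi.
  by rewrite !ifF //; apply/negbTE; rewrite ?ltnNge; apply/negP; lia.
under eq_big_nat => i _ do rewrite /steep eps_le.
have r1 : (r == 1%N) = false by apply/eqP; lia.
rewrite split4 mid tail r1 ltnn !eqxx.
have := split4 p; rewrite p_sum1; lra.
Qed.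

Lemma steep_gt0_tail i : (1 <= i <= d)%N -> 0 < steep d p eps i -> eps < sum_from d p i.
Proof.
move=> hi; have [->|i1] := eqVneq i 1%N; first by rewrite sum_from1.
rewrite /steep (negbTE i1); case: ifP => [eps_le|_]; last by rewrite ltxx.
have [r_range r_le r_lt] := steepR_spec eps_le.
have [ir pi_gt0|ri] := ltnP i r.
  have pi_le : p i <= \sum_(i <= j < r) p j.
    by apply: ler_term_sum_nat => [j hj|]; [apply: p_ge0|]; lia.
  rewrite /sum_from (@big_cat_nat _ _ _ r i d.+1) /= -/(sum_from d p r); try lia.
  lra.
case: eqP => [->|_]; last by rewrite ltxx.
have := @sum_fromE _ d p r ltac:(lia); lra.
Qed.


Lemma trdist_cut K : (K <= d)%N -> (forall i, (1 <= i <= K)%N -> s i <= p i) ->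
  (forall i, (K < i <= d)%N -> p i <= s i) -> trdist d p s = sum_to p K - sum_to s K.
Proof.
move=> Kd ps sp; rewrite /trdist (@big_cat_nat _ _ _ K.+1) /=; try lia.
rewrite [X in _ * (X + _)](eq_big_nat _ _ (F2 := fun i => p i - s i)) => [|i hi]; last first.
  by rewrite ger0_norm // subr_ge0 ps //; lia.
rewrite [X in _ * (_ + X)](eq_big_nat _ _ (F2 := fun i => s i - p i)) => [|i hi]; last first.
  by rewrite ler0_norm ?opprB // subr_le0 sp //; lia.
rewrite !sumrB -/(sum_to p K) -/(sum_to s K) -/(sum_from d s K.+1) -/(sum_from d p K.+1).
have := @sum_to_sum_from _ d p K Kd; have := @sum_to_sum_from _ d s K Kd.
rewrite /(sum_to p d) /(sum_to s d) p_sum1 s_sum1; lra.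
Qed.

Local Notation K := (last 0%N [seq i <- iota 1 d | s i < p i]).

Lemma excess_cut : eps <= trdist d p s ->
  [/\ (1 <= K < d)%N, forall i, (1 <= i <= K)%N -> s i < p i
    & forall i, (K < i <= d)%N -> p i <= s i].
Proof.
move=> eps_le.
have K_ex : exists2 j, (1 <= j < 1 + d)%N & s j < p j.
  apply: contrapT => no_excess.
  have ps i : (0 < i <= d)%N -> p i <= s i.
    by move=> hi; rewrite leNgt; apply/negP => ?; apply: no_excess; exists i => //; lia.
  have := @trdist_cut 0 isT (fun i hi => ltac:(lia)) ps.
  by rewrite !sum_to0 subrr => TD; move: eps_le; rewrite TD leNgt eps_gt0.
have /= [K_range pK K_max] := last_filter_iota K_ex.
have sp i : (K < i <= d)%N -> p i <= s i.
  by move=> hi; rewrite leNgt; apply/negP => /(K_max i ltac:(lia)); lia.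
have ps i : (1 <= i <= K)%N -> s i < p i.
  move=> hi; have sK : 0 < s K by apply: s_gt0; lia.
  have si : 0 < s i by apply: s_gt0; lia.
  rewrite -[s i]mul1r -ltr_pdivlMr //; apply: lt_le_trans (ratio_le i K _ _); try lia.
  by rewrite ltr_pdivlMr // mul1r.
split=> //; rewrite andbC ltn_neqAle -andbA; apply/and3P; split; try lia.
apply/eqP => Kd; have : \sum_(1 <= i < d.+1) s i < \sum_(1 <= i < d.+1) p i.
  by apply: ltr_sum_nat => // i hi; apply: ps; lia.
by rewrite p_sum1 s_sum1 ltxx.
Qed.


Local Notation M := (flatM d p s eps).
Local Notation N := (flatN d p s eps).

Lemma flat_cuts : eps <= trdist d p s ->
  [/\ (1 <= M)%N, (M < N <= d)%N, condM p s eps M, condN d p s eps N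
    & eps <= sum_from d s N - sum_from d p N].
Proof.
move=> eps_le; have [K_range ps sp] := excess_cut eps_le.
have TD := @trdist_cut K ltac:(lia) (fun i hi => ltW (ps i hi)) sp.
have hp := @sum_to_sum_from _ d p K ltac:(lia).
have hs := @sum_to_sum_from _ d s K ltac:(lia).
rewrite /(sum_to p d) /(sum_to s d) p_sum1 s_sum1 in hp hs.
have SK : 0 <= sum_to s K by apply: sumr_ge0_nat => i hi; apply: s_ge0; lia.
have ZK : 0 <= sum_from d s K.+1 by apply: sumr_ge0_nat => i hi; apply: s_ge0; lia.
have condMK : condM p s eps K.
  have sK1 : 0 < s K.+1 by apply: s_gt0; lia.
  have : p K.+1 / s K.+1 * sum_to s K <= sum_to s K.
    by rewrite ler_piMl // ler_pdivrMr // mul1r sp //; lia.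
  rewrite /condM; lra.
have condNK : condN d p s eps K.+1.
  have sK : 0 < s K by apply: s_gt0; lia.
  have : sum_from d s K.+1 <= p K / s K * sum_from d s K.+1.
    by rewrite ler_peMl // ler_pdivlMr // mul1r ltW // ps //; lia.
  rewrite /condN /=; lra.
have M_ex : exists2 j, (1 <= j < 1 + d.-1)%N & condM p s eps j by exists K => //; lia.
have N_ex : exists2 j, (2 <= j < 2 + d.-1)%N & condN d p s eps j by exists K.+1 => //; lia.
have /= [] := head_filter_iota M_ex; rewrite -/M => M_range condM_M M_min.
have /= [] := last_filter_iota N_ex; rewrite -/N => N_range condN_N N_max.
have MK : (M <= K)%N by apply: M_min => //; lia.
have KN : (K < N)%N by apply: N_max => //; lia.
split=> //; try lia.
move: condN_N; rewrite /condN.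
have [NK|NK] := eqVneq N K.+1; first by rewrite NK /=; lra.
have sN : 0 < s N.-1 by apply: s_gt0; lia.
have ZN : 0 <= sum_from d s N by apply: sumr_ge0_nat => i hi; apply: s_ge0; lia.
have : p N.-1 / s N.-1 * sum_from d s N <= sum_from d s N.
  by rewrite ler_piMl // ler_pdivrMr // mul1r sp //; lia.
lra.
Qed.


Local Notation T := ((sum_to p M - eps) / sum_to s M).
Local Notation B := ((sum_from d p N + eps) / sum_from d s N).

Lemma flatE i : eps <= trdist d p s ->
  flat d p s eps i = if (i <= M)%N then s i * T else if (N <= i)%N then s i * B else p i.
Proof. by move=> eps_le; rewrite /flat ltNge eps_le. Qed.

Lemma flat_levels : eps <= trdist d p s ->
  [/\ 0 < sum_to s M, 0 < sum_from d s N, p M.+1 / s M.+1 <= T, 0 <= B & B <= 1].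
Proof.
move=> eps_le; have [M1 MN condM_M condN_N gap] := flat_cuts eps_le.
have SM : 0 < sum_to s M.
  apply: (lt_le_trans (s_gt0 1 ltac:(lia))).
  by apply: ler_term_sum_nat => [i hi|]; [apply: s_ge0|]; lia.
have ZN : 0 < sum_from d s N.
  apply: (lt_le_trans (s_gt0 N ltac:(lia))).
  by apply: ler_term_sum_nat => [i hi|]; [apply: s_ge0|]; lia.
split=> //.
- by rewrite ler_pdivlMr //; move: condM_M; rewrite /condM; lra.
- have := sum_from_ge0 N ltac:(lia).
  (* lra does not see section hypotheses *)
  by move=> ZpN; rewrite divr_ge0 ?ltW //; have := eps_gt0; lra.
- by rewrite ler_pdivrMr // mul1r; lra.
Qed.

Lemma flat_ge0 i : (1 <= i <= d)%N -> 0 <= flat d p s eps i.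
Proof.
move=> hi; have [TD|eps_le] := ltP (trdist d p s) eps; first by rewrite /flat TD s_ge0.
have [SM ZN TM B0 _] := flat_levels eps_le; have [M1 MN _ _ _] := flat_cuts eps_le.
have ratio0 : 0 <= p M.+1 / s M.+1 by rewrite divr_ge0 ?p_ge0 ?s_ge0 //; lia.
rewrite flatE //; case: leqP => _; first by rewrite mulr_ge0 ?s_ge0 // (le_trans ratio0 TM).
by case: leqP => _; [rewrite mulr_ge0 ?s_ge0 | apply: p_ge0].
Qed.

Lemma sum_flat : \sum_(1 <= i < d.+1) flat d p s eps i = 1.
Proof.
have [TD|eps_le] := ltP (trdist d p s) eps.
  by under eq_big_nat => i _ do rewrite /flat TD.
have [SM ZN _ _ _] := flat_levels eps_le; have [M1 MN _ _ _] := flat_cuts eps_le.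
have split3 (F : nat -> R) : \sum_(1 <= i < d.+1) F i =
    sum_to F M + \sum_(M.+1 <= i < N) F i + sum_from d F N.
  by rewrite /sum_to /sum_from -!big_cat_nat //; lia.
under eq_big_nat => i _ do rewrite flatE //.
rewrite split3.
have -> : sum_to (fun i => if (i <= M)%N then s i * T else if (N <= i)%N then s i * B
    else p i) M = sum_to p M - eps.
  rewrite -[RHS](divfK (lt0r_neq0 SM)) [RHS]mulrC /sum_to mulr_suml.
  by apply: eq_big_nat => i hi; rewrite ifT //; lia.
have -> : \sum_(M.+1 <= i < N) (if (i <= M)%N then s i * T else if (N <= i)%N then s i * B
    else p i) = \sum_(M.+1 <= i < N) p i.
  by apply: eq_big_nat => i hi; rewrite !ifF //; apply/negbTE; rewrite -ltnNge; lia.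
have -> : sum_from d (fun i => if (i <= M)%N then s i * T else if (N <= i)%N then s i * B
    else p i) N = sum_from d p N + eps.
  rewrite -[RHS](divfK (lt0r_neq0 ZN)) [RHS]mulrC /sum_from mulr_suml.
  by apply: eq_big_nat => i hi; rewrite ifF ?ifT //; [lia | apply/negbTE; rewrite -ltnNge; lia].
by have := split3 p; rewrite p_sum1; lra.
Qed.

Lemma flat_le c i : 1 <= c ->
  (forall m, (m <= d)%N -> sum_to p m <= eps + c * sum_to s m) ->
  (1 <= i <= d)%N -> flat d p s eps i <= c * s i.
Proof.
move=> c1 head_le hi; have si := s_gt0 i hi.
have [TD|eps_le] := ltP (trdist d p s) eps; first by rewrite /flat TD ler_pMl.
have [SM ZN TM B0 B1] := flat_levels eps_le; have [M1 MN _ _ _] := flat_cuts eps_le.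
have Tc : T <= c by rewrite ler_pdivrMr //; have := head_le M ltac:(lia); lra.
rewrite flatE //; case: leqP => iM; first by rewrite mulrC ler_pM2r.
case: leqP => iN; first by rewrite mulrC ler_pM2r // (le_trans B1).
rewrite -ler_pdivrMr //; apply: le_trans Tc; apply: le_trans TM; apply: ratio_le; lia.
Qed.


Lemma steep_gt0_ratio i : (1 <= i <= d)%N -> 0 < steep d p eps i ->
  powR 2 (relent d p s - fsig d p s eps) * s i <= p i.
Proof.
move=> hi steep_gt0; rewrite leNgt; apply/negP => p_lt.
have [tail _] := llr_tail_masses (s := s) p_ge0 p_sum1 eps_gt0 eps_lt1.
have := steep_gt0_tail _ hi steep_gt0; have := sum_from_le_mass _ _ hi p_lt.
have : mass d p [pred j | p j < powR 2 (relent d p s - fsig d p s eps) * s j] <=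
    mass d p [pred j | fsig d p s eps < relent d p s - (log2 (p j) - log2 (s j))].
  apply: ler_mass => // j hj pj /=.
  by rewrite ltr_powR2M_log2 ?s_gt0 //; lra.
lra.
Qed.

Lemma flat_le_ratio i : (1 <= i <= d)%N ->
  flat d p s eps i <= powR 2 (relent d p s + fsig d p s eps) * s i.
Proof.
move=> hi; set c := powR 2 _; apply: flat_le => // [|m md].
  by apply: powR2_ge1; rewrite addr_ge0 ?sqrtr_ge0 // relent_ge0.
have [_ tail] := llr_tail_masses (s := s) p_ge0 p_sum1 eps_gt0 eps_lt1.
apply: le_trans (sum_to_le_mass c m (powR_ge0 _ _) md) _; rewrite lerD2r.
apply: le_trans tail; apply: ler_mass => // j hj pj /=.
by rewrite gtr_powR2M_log2 ?s_gt0 //; lra.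
Qed.

End Approximations.

Theorem lemma7 (R : realType) (d : nat) (p s : nat -> R) (eps : R) :
  (1 <= d)%N ->
  (forall i, (1 <= i <= d)%N -> 0 <= p i) ->
  \sum_(1 <= i < d.+1) p i = 1 ->
  (forall i, (1 <= i <= d)%N -> 0 < s i) ->
  \sum_(1 <= i < d.+1) s i = 1 ->
  (forall i, (1 <= i < d)%N -> p i.+1 / s i.+1 <= p i / s i) ->
  0 < eps -> eps < 1 ->
  let r_st := powR 2 (relent d p s - fsig d p s eps) in
  let r_fl := powR 2 (relent d p s + fsig d p s eps) in
  (forall pi, lorenz_order d (steep d p eps) s pi ->
     forall x, 0 <= x <= 1 -> ell r_st x <= lorenz d (steep d p eps) s pi x) /\
  (forall pi, lorenz_order d (flat d p s eps) s pi ->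
     forall x, 0 <= x <= 1 -> lorenz d (flat d p s eps) s pi x <= ell r_fl x).
Proof.
move=> d_gt0 p_ge0 p_sum1 s_gt0 s_sum1 sorted eps_gt0 eps_lt1 r_st r_fl.
split=> pi [pi_perm pi_sorted] x x01; rewrite lorenz_comp;
  have [pi_range _] := pi_perm;
  have s_pi_gt0 i : (1 <= i <= d)%N -> 0 < (s \o pi) i by move/pi_range/s_gt0.
- apply: (@ell_le_lorenz _ _ _ _ d_gt0 _ _ _ _ _ r_st (p \o pi)) => //.
  + by rewrite sum_to_perm.
  + by move=> i /pi_range; apply: steep_ge0.
  + by rewrite sum_to_perm //; apply: sum_steep.
  + by move=> i /pi_range; apply: p_ge0.
  + by rewrite sum_to_perm.
  + by move=> i /pi_range hi; apply: steep_gt0_ratio.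
  + exact: powR_ge0.
- apply: lorenz_le_ell => //.
  + by rewrite sum_to_perm.
  + by move=> i /pi_range; apply: flat_ge0.
  + by rewrite sum_to_perm //; apply: sum_flat.
  + by move=> i /pi_range; apply: flat_le_ratio.
Qed.
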